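(* Let $G$ be a simple cycle-extendable graph, let $x_0$ be a vertex of degree two in $G$, and let $J'=G/x_0$. Then either $J'$ is simple or $J'$ has exactly two multiple edges (that is, exactly one pair of parallel edges and no other parallel edges). Furthermore, if $G$ is irreducible, then the underlying simple graph of $J'$ is also irreducible.
   Context: A graph is matching covered if it is connected, has at least two vertices, and every edge lies in some perfect matching; it is cycle-extendable if moreover for every even cycle $C$ the graph $G-V(C)$ has a perfect matching. $G/x_0$ is the graph obtained from $G$ by contracting both edges incident with the degree-two vertex $x_0$ into a single vertex (parallel edges may arise). A graph is irreducible if it is simple and its vertices of degree two form a stable set. *)

From mathcomp Require Import all_boot.
Set Implicit Arguments. Unset Strict Implicit. Unset Printing Implicit Defensive.

Section Graphs.
Variable T : finType.

Definition simple_graph (e : rel T) : Prop :=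
  symmetric e /\ irreflexive e.

Definition edges (e : rel T) : {set {set T}} :=
  [set E | [exists a, exists b, e a b && (E == [set a; b])]].

Definition deg_on (S : {set T}) (e : rel T) (x : T) : nat :=
  #|[set y in S | e x y]|.

Definition deg (e : rel T) (x : T) : nat := deg_on setT e x.

Definition perfect_matching_on (e : rel T) (S : {set T}) (M : {set {set T}}) : Prop :=
  M \subset edges e /\
  (forall E, E \in M -> E \subset S) /\
  (forall x, x \in S -> #|[set E in M | x \in E]| = 1).

Definition has_perfect_matching_on (e : rel T) (S : {set T}) : Prop :=
  exists M, perfect_matching_on e S M.

Definition connected_graph (e : rel T) : Prop := forall x y, connect e x y.

Definition matching_covered (e : rel T) : Prop :=
  connected_graph e /\ 2 <= #|T| /\
  (forall a b, e a b -> exists M, perfect_matching_on e setT M /\ [set a; b] \in M).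

Definition even_cycle (e : rel T) (s : seq T) : Prop :=
  [/\ uniq s, 3 <= size s, ~~ odd (size s) & cycle e s].

Definition cycle_extendable (e : rel T) : Prop :=
  matching_covered e /\
  (forall s, even_cycle e s -> has_perfect_matching_on e (~: [set x in s])).

Definition irreducible_on (S : {set T}) (e : rel T) : Prop :=
  (forall x y, x \in S -> y \in S -> e x y = e y x) /\
  (forall x, x \in S -> ~~ e x x) /\
  (forall x y, x \in S -> y \in S -> deg_on S e x = 2 -> deg_on S e y = 2 ->
     ~~ e x y).

Definition irreducible (e : rel T) : Prop := irreducible_on setT e.

(* ---- The multigraph G/x0 ----
   The neighbours of x0 and x0 itself are merged into a single vertex,
   represented by x0.  [bc_map e x0] sends each neighbour of x0 to x0. *)
Definition bc_map (e : rel T) (x0 : T) (a : T) : T :=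
  if e x0 a then x0 else a.

Definition bc_vertices (e : rel T) (x0 : T) : {set T} :=
  [set a | ~~ e x0 a].

(* multiplicity of the edge {p,q} in G/x0 (for p = q: number of loops at p):
   edges of G not incident with x0 whose image is {p,q} *)
Definition bc_mult (e : rel T) (x0 : T) (p q : T) : nat :=
  #|[set E in edges e | (x0 \notin E) && (bc_map e x0 @: E == [set p; q])]|.

Definition bc_simple (e : rel T) (x0 : T) : Prop :=
  (forall p, p \in bc_vertices e x0 -> bc_mult e x0 p p = 0) /\
  (forall p q, p \in bc_vertices e x0 -> q \in bc_vertices e x0 -> p != q ->
     bc_mult e x0 p q <= 1).

Definition bc_exactly_two_multiple_edges (e : rel T) (x0 : T) : Prop :=
  exists p q, [/\ p \in bc_vertices e x0, q \in bc_vertices e x0, p != q,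
    bc_mult e x0 p q = 2 &
    forall p' q', p' \in bc_vertices e x0 -> q' \in bc_vertices e x0 -> p' != q' ->
      [set p'; q'] != [set p; q] -> bc_mult e x0 p' q' <= 1].

Definition bc_underlying (e : rel T) (x0 : T) : rel T :=
  fun p q => [&& p \in bc_vertices e x0, q \in bc_vertices e x0, p != q &
                 0 < bc_mult e x0 p q].

End Graphs.

(* Let b and c be the two neighbours of x0.  They are not adjacent, since a
   perfect matching through bc would leave x0 unmatched; hence G/x0 has no
   loop, and a multiple edge of G/x0 can only join the contracted vertex to a
   common neighbour of b and c.  Two such common neighbours q1, q2 would span
   the even cycle b q1 c q2, whose removal isolates x0; so there is at most one.

   For irreducibility: b and c have degree at least 3 and at most one common
   neighbour besides x0, so the contracted vertex has degree at least 3; a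
   vertex adjacent to at most one of b, c keeps its degree.  Finally, let x be
   a common neighbour of b and c of degree 2 in G/x0.  A perfect matching M0
   through x0 b and one M1 through x0 c then match x to the same vertex, so
   the M0/M1-alternating path from b to c avoids x and closes with x into an
   even cycle whose removal isolates x0. *)

From mathcomp Require Import all_boot zify.
Set Implicit Arguments. Unset Strict Implicit. Unset Printing Implicit Defensive.

Lemma eq_set2 (T : finType) (u v p q : T) : [set u; v] = [set p; q] ->
  (u = p /\ v = q) \/ (u = q /\ v = p).
Proof.
move=> E; have /set2P up : u \in [set p; q] by rewrite -E set21.
have /set2P vp : v \in [set p; q] by rewrite -E set22.
have /set2P pu : p \in [set u; v] by rewrite E set21.
have /set2P qu : q \in [set u; v] by rewrite E set22.
by case: up vp pu qu => ? [] ? [] ? [] ?; subst; tauto.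
Qed.

Section Graph.
Variables (T : finType) (e : rel T).
Hypotheses (sym_e : symmetric e) (irr_e : irreflexive e).

Lemma edgesP E : reflect (exists a b, e a b /\ E = [set a; b]) (E \in edges e).
Proof.
rewrite inE; apply: (iffP existsP) => [[a /existsP [b /andP [eab /eqP ->]]]|].
  by exists a, b.
case=> a [b [eab ->]].
by exists a; apply/existsP; exists b; rewrite eab eqxx.
Qed.

Lemma mem_set2_edges a b : ([set a; b] \in edges e) = e a b.
Proof.
apply/edgesP/idP => [[u [v [euv /eq_set2 [] [-> ->]]]]|eab] //.
  by rewrite sym_e.
by exists a, b.
Qed.

Lemma adj_neq a b : e a b -> a != b.
Proof. by apply: contraTneq => ->; rewrite irr_e. Qed.

Local Notation perfect_matching M := (perfect_matching_on e setT M).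

Definition partner (M : {set {set T}}) x := odflt x [pick v | [set x; v] \in M].

Section PerfectMatching.
Variable M : {set {set T}}.
Hypothesis pmM : perfect_matching M.

Lemma matched_edge x : exists v, [set x; v] \in M.
Proof.
case: pmM => Me [_ one]; have /eqP/cards1P [E HE] := one x (in_setT x).
have /setIdP [EM xE] : E \in [set E in M | x \in E] by rewrite HE set11.
have /edgesP [a [b [_ Eab]]] := subsetP Me _ EM.
by move: xE EM; rewrite Eab => /set2P [] <-; [exists b | rewrite setUC; exists a].
Qed.

Lemma matched_edge_uniq x v v' : [set x; v] \in M -> [set x; v'] \in M -> v = v'.
Proof.
case: pmM => Me [_ one] xv xv'.
have /card_le1_eqP E1 : #|[set E in M | x \in E]| <= 1 by rewrite one ?inE.
have : [set x; v] = [set x; v'] by apply: E1; rewrite inE ?xv ?xv' set21.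
by case/eq_set2 => [[_ ->]|[<- ->]].
Qed.

Lemma partner_in x : [set x; partner M x] \in M.
Proof.
rewrite /partner; case: pickP => [v //|none].
by have [v] := matched_edge x; rewrite none.
Qed.

Lemma partner_eq x v : [set x; v] \in M -> partner M x = v.
Proof. exact: matched_edge_uniq (partner_in x). Qed.

Lemma partner_adj x : e x (partner M x).
Proof. by case: pmM => Me _; rewrite -mem_set2_edges (subsetP Me _ (partner_in x)). Qed.

Lemma partnerK : involutive (partner M).
Proof. by move=> x; apply: partner_eq; rewrite setUC partner_in. Qed.

Lemma partner_neq x : partner M x != x.
Proof. by rewrite eq_sym adj_neq ?partner_adj. Qed.

End PerfectMatching.

Lemma matching_covered_partner a b : matching_covered e -> e a b ->
  exists2 M, perfect_matching M & partner M a = b.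
Proof.
case=> _ [_ mc] /mc [M [pmM abM]]; exists M => //; exact: partner_eq.
Qed.

Lemma cycle_extendable_nbr_off_cycle s x : cycle_extendable e -> even_cycle e s ->
  x \notin s -> exists2 v, e x v & v \notin s.
Proof.
case=> _ ce /ce [M [Me [MS one]]] xs.
have xS : x \in ~: [set y in s] by rewrite !inE xs.
have /eqP/cards1P [E HE] := one x xS.
have /setIdP [EM xE] : E \in [set E in M | x \in E] by rewrite HE set11.
have ES := subsetP (MS _ EM).
have /edgesP [a [b [eab Eab]]] := subsetP Me _ EM.
move: ES xE; rewrite Eab => ES /set2P [] ?; subst x.
  by exists b => //; have := ES b (set22 a b); rewrite !inE.
by exists a; rewrite 1?sym_e //; have := ES a (set21 a b); rewrite !inE.
Qed.

End Graph.

Section WalkCycle.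
Variables (T : eqType) (e : rel T) (W : nat -> T).
Hypothesis W_adj : forall i, e (W i) (W i.+1).

Lemma path_mkseq x n : e x (W 0) -> path e x (mkseq W n).
Proof.
move=> xW; apply/(pathP x) => i; rewrite size_mkseq => lti.
by rewrite nth_mkseq //; case: i lti => [|i] lti //=; rewrite nth_mkseq 1?ltnW.
Qed.

Lemma cycle_mkseq d n : e d (W 0) -> e (W n) d -> cycle e (d :: mkseq W n.+1).
Proof.
move=> dW Wd; change (path e d (rcons (mkseq W n.+1) d)).
by rewrite rcons_path path_mkseq // mkseqS last_rcons.
Qed.

End WalkCycle.

Section AlternatingWalk.
Variables (T : finType) (f g : T -> T).
Hypotheses (fK : involutive f) (gK : involutive g).
Hypotheses (f_neq : forall x, f x != x) (g_neq : forall x, g x != x).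
Variable b : T.

Definition alt_step n := if odd n then g else f.

Fixpoint alt_walk n := if n is n'.+1 then alt_step n' (alt_walk n') else b.

Local Notation W := alt_walk.

Lemma alt_stepK n : involutive (alt_step n).
Proof. by rewrite /alt_step; case: odd. Qed.

Lemma alt_walk_half n : W n = (if odd n then f else id) (iter n./2 (g \o f) b).
Proof.
elim: n => // n IH; rewrite [W _]/= IH /alt_step -uphalfE uphalf_half /=.
by case: (odd n).
Qed.

Lemma alt_walk_odd_dist p n : W p != W (p + n.*2.+1).
Proof.
elim: n p => [|n IH] p.
  by rewrite addn1 /= eq_sym /alt_step; case: odd.
apply: contra (IH p.+1) => /eqP Wp; apply/eqP.
move: Wp; rewrite doubleS !addnS => Wp.
have step : alt_step (p + n.*2).+2 = alt_step p.
  by rewrite /alt_step /= negbK oddD odd_double addbF.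
rewrite addSn -[W p.+1]/(alt_step p (W p)) Wp.
by rewrite -[W (p + n.*2).+3]/(alt_step _ (W (p + n.*2).+2)) step alt_stepK.
Qed.

Lemma alt_walk_agree i : f (W i.+1) = g (W i.+1) -> W i = W i.+2.
Proof.
move=> fg; have -> : W i = alt_step i (W i.+1) by rewrite /= alt_stepK.
rewrite -[W i.+2]/(alt_step i.+1 (W i.+1)); move: fg; set w := W i.+1.
by rewrite /alt_step /=; case: odd.
Qed.

Lemma alt_walk_reaches c : (g \o f) c = b ->
  exists k, W k.*2 = c /\ uniq (mkseq W k.*2.+2).
Proof.
move=> hc; set h := g \o f.
have hinj : injective h := inj_comp (can_inj gK) (can_inj fK).
have conn : fconnect h b c by rewrite fconnect_sym // -hc fconnect1.
have korder := findex_max conn.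
exists (findex h b c); split.
  by rewrite alt_walk_half odd_double doubleK iter_findex.
apply/mkseq_uniqP => p q; rewrite !inE => lp lq Wpq.
have par : odd p = odd q.
  wlog le_pq : p q Wpq {lp lq} / p <= q.
    move=> wl; case/orP: (leq_total p q) => [/(wl p q Wpq)|/(wl q p (esym Wpq))] //.
  apply: contraTeq (alt_walk_odd_dist p ((q - p)./2)) => npq; rewrite negbK.
  have -> : p + ((q - p)./2).*2.+1 = q.
    have odd_qp : odd (q - p).
      by move: npq; rewrite -{1}(subnK le_pq) oddD; case: (odd p); case: odd.
    by have := odd_double_half (q - p); rewrite odd_qp; lia.
  by rewrite Wpq.
have hpq : iter p./2 h b = iter q./2 h b.
  by move: Wpq; rewrite !alt_walk_half par; case: (odd q) => //= /(can_inj fK).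
have lt_half n : n < (findex h b c).*2.+2 -> n./2 < order h b.
  by move=> ln; apply: leq_ltn_trans korder; lia.
rewrite -(odd_double_half p) -(odd_double_half q) par.
by rewrite -(findex_iter (lt_half _ lp)) hpq findex_iter ?lt_half.
Qed.

Lemma mem_alt_walk_agree d n : f d = g d -> uniq (mkseq W n.+1) ->
  d \in mkseq W n.+1 -> d = W 0 \/ d = W n.
Proof.
move=> fg /mkseq_uniqP Winj /mapP [i]; rewrite mem_iota add0n => lin dW; subst d.
case: i lin fg => [|i] lin fg; first by left.
case: (ltngtP i.+1 n) => [lt_in|lt_ni|->]; [|lia|by right].
suff : i = i.+2 by lia.
by apply: Winj; rewrite ?inE; [lia | lia | exact: alt_walk_agree].
Qed.

End AlternatingWalk.

Section Contraction.
Variables (T : finType) (e : rel T) (x0 : T).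
Hypotheses (sym_e : symmetric e) (irr_e : irreflexive e).

Local Notation V := (bc_vertices e x0).
Local Notation bm := (bc_map e x0).
Local Notation J := (bc_underlying e x0).

Lemma deg_card x : deg e x = #|[set y | e x y]|.
Proof. by apply: eq_card => y; rewrite !inE. Qed.

Lemma mem_bc_vertices a : (a \in V) = ~~ e x0 a.
Proof. by rewrite inE. Qed.

Lemma bc_vertices_x0 : x0 \in V.
Proof. by rewrite inE irr_e. Qed.

Lemma bc_vertices_nbr_neq x u : x \in V -> e x u -> u != x0.
Proof. by rewrite mem_bc_vertices => xV; apply: contraTneq => ->; rewrite sym_e. Qed.

Lemma bc_map_id a : a \in V -> bm a = a.
Proof. by rewrite /bc_map mem_bc_vertices => /negbTE ->. Qed.

Lemma bc_map_nbr a : e x0 a -> bm a = x0.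
Proof. by rewrite /bc_map => ->. Qed.

Lemma bc_map_eq_x0 a : a != x0 -> (bm a == x0) = e x0 a.
Proof. by rewrite /bc_map => ax; case: ifP; rewrite ?eqxx // (negbTE ax). Qed.

Lemma bc_map_fixed a : a != x0 -> bm a != x0 -> bm a = a.
Proof. by move=> ax; rewrite bc_map_eq_x0 // -mem_bc_vertices => /bc_map_id. Qed.

Definition bc_edges p q :=
  [set E in edges e | (x0 \notin E) && (bm @: E == [set p; q])].

Lemma bc_multE p q : bc_mult e x0 p q = #|bc_edges p q|.
Proof. by []. Qed.

Lemma bc_edgesP p q E : reflect (exists a a', [/\ e a a', a != x0, a' != x0,
  E = [set a; a'] & [set bm a; bm a'] = [set p; q]]) (E \in bc_edges p q).
Proof.
rewrite inE; apply: (iffP andP) => [[/edgesP [a [a' [eaa' ->]]] /andP [xE /eqP im]]|].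
  exists a, a'; split => //.
  - by apply: contraNneq xE => <-; exact: set21.
  - by apply: contraNneq xE => <-; exact: set22.
  - by rewrite -im imsetU1 imset_set1.
case=> a [a' [eaa' ax ax' -> im]]; split; first by apply/edgesP; exists a, a'.
by rewrite imsetU1 imset_set1 im eqxx !inE negb_or !(eq_sym x0) ax ax'.
Qed.

Lemma bc_mult_sym p q : bc_mult e x0 p q = bc_mult e x0 q p.
Proof. by rewrite /bc_mult setUC. Qed.

Lemma bc_mult_off p q : p \in V -> q \in V -> p != x0 -> q != x0 ->
  bc_mult e x0 p q = e p q.
Proof.
move=> pV qV px qx; rewrite bc_multE.
suff -> : bc_edges p q = if e p q then [set [set p; q]] else set0.
  by case: (e p q); rewrite ?cards1 ?cards0.
have fixed u : u != x0 -> bm u \in [set p; q] -> bm u = u.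
  by move=> ux /set2P [] bmu; apply: bc_map_fixed; rewrite ?bmu.
apply/setP => E; apply/bc_edgesP/idP => [[a [a' [eaa' ax ax' -> im]]]|].
  have pq : [set a; a'] = [set p; q].
    by rewrite -{1}(fixed a) -1?(fixed a') -?im ?set21 ?set22.
  have epq : e p q by rewrite -(mem_set2_edges sym_e) -pq mem_set2_edges.
  by rewrite pq epq set11.
case: ifP => [epq /set1P -> | _]; last by rewrite inE.
by exists p, q; rewrite !bc_map_id.
Qed.

Lemma bc_mult_x0 q : q \in V -> q != x0 ->
  bc_mult e x0 x0 q = #|[set u | e x0 u & e u q]|.
Proof.
move=> qV qx; rewrite bc_multE -(@card_in_imset _ _ (fun u => [set u; q])); last first.
  move=> u u'; rewrite !inE => /andP [x0u _] _ /eq_set2 [[] //|[uq _]].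
  by move: qV; rewrite -uq mem_bc_vertices x0u.
have onto u : u != x0 -> bm u = q -> u = q.
  by move=> ux bmu; rewrite -bmu bc_map_fixed ?bmu.
have contracted u : u != x0 -> bm u = x0 -> e x0 u.
  by move=> ux /eqP; rewrite bc_map_eq_x0.
apply: eq_card => E; apply/bc_edgesP/imsetP => [[a [a' [eaa' ax ax' -> im]]]|].
  case/eq_set2: im => [[/(contracted _ ax) x0a /(onto _ ax') a'q]|].
    by exists a; rewrite ?inE ?x0a -?a'q.
  case=> /(onto _ ax) aq /(contracted _ ax') x0a'.
  by exists a'; rewrite ?inE ?x0a' -?aq 1?sym_e // setUC.
case=> u; rewrite inE => /andP [x0u uq] ->; exists u, q.
by rewrite eq_sym (adj_neq irr_e) // bc_map_nbr // bc_map_id.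
Qed.

Lemma bc_mult_x0x0 : (forall u v, e x0 u -> e x0 v -> ~~ e u v) ->
  bc_mult e x0 x0 x0 = 0.
Proof.
move=> stable; apply/eqP; rewrite cards_eq0; apply/eqP/setP => E; rewrite in_set0.
apply/bc_edgesP => -[a [a' [eaa' ax ax' _ /eq_set2 im]]].
have [/eqP bma /eqP bma'] : bm a = x0 /\ bm a' = x0 by case: im => -[-> ->].
move: (stable a a'); rewrite -bc_map_eq_x0 // -bc_map_eq_x0 //.
by rewrite bma bma' eaa' => /(_ isT isT).
Qed.

Lemma bc_underlying_sym p q : J p q = J q p.
Proof. by rewrite /bc_underlying eq_sym bc_mult_sym andbCA. Qed.

Lemma bc_underlying_off x y : x \in V -> x != x0 -> y != x0 ->
  J x y = (y \in V) && e x y.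
Proof.
move=> xV xx yx; rewrite /bc_underlying xV /=; case: (boolP (y \in V)) => //= yV.
rewrite bc_mult_off //.
by case: (boolP (e x y)) => [/(adj_neq irr_e) ->|]; rewrite ?andbF.
Qed.

Lemma bc_underlying_x0 x : x \in V -> x != x0 ->
  J x0 x = (0 < #|[set u | e x0 u & e u x]|).
Proof.
by move=> xV xx; rewrite /bc_underlying bc_vertices_x0 xV eq_sym xx bc_mult_x0.
Qed.

Lemma bc_underlying_nbhd x : x \in V -> x != x0 ->
  [set y in V | J x y] = bm @: [set y | e x y].
Proof.
move=> xV xx; apply/setP => y; rewrite inE.
case: (eqVneq y x0) => [->|yx].
  rewrite bc_vertices_x0 bc_underlying_sym bc_underlying_x0 //.
  apply/card_gt0P/imsetP => [[u]|[u]]; rewrite !inE.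
    by case/andP => x0u ux; exists u; rewrite ?inE 1?sym_e ?bc_map_nbr.
  move=> xu /esym/eqP; rewrite bc_map_eq_x0 ?(bc_vertices_nbr_neq xV xu) // => x0u.
  by exists u; rewrite inE x0u sym_e.
rewrite bc_underlying_off // andbA andbb; apply/andP/imsetP => [[yV xy]|[u]].
  by exists y; rewrite ?inE ?bc_map_id.
rewrite inE => xu ybm; have ux := bc_vertices_nbr_neq xV xu.
have bmu : bm u = u by rewrite bc_map_fixed -?ybm.
have uV : u \in V by rewrite mem_bc_vertices -bc_map_eq_x0 // bmu.
by rewrite ybm bmu.
Qed.

Lemma bc_underlying_deg x : x \in V -> x != x0 ->
  #|[set u | e x0 u & e u x]| <= 1 -> deg_on V J x = deg e x.
Proof.
move=> xV xx /card_le1_eqP le1; rewrite /deg_on bc_underlying_nbhd // deg_card.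
apply: card_in_imset => u u'; rewrite !inE => xu xu'.
have ux := bc_vertices_nbr_neq xV xu; have u'x := bc_vertices_nbr_neq xV xu'.
rewrite /bc_map; case: (boolP (e x0 u)) => x0u; case: (boolP (e x0 u')) => x0u' //.
- by move=> _; apply: le1; rewrite inE ?x0u ?x0u' sym_e.
- by move=> u'x0; rewrite -u'x0 eqxx in u'x.
- by move=> ux0; rewrite ux0 eqxx in ux.
Qed.

End Contraction.

Section DegreeTwoVertex.
Variables (T : finType) (e : rel T) (x0 b c : T).
Hypotheses (sym_e : symmetric e) (irr_e : irreflexive e).
Hypothesis ce : cycle_extendable e.
Hypothesis nbr_x0 : forall v, e x0 v = (v == b) || (v == c).
Hypothesis bc : b != c.

Local Notation V := (bc_vertices e x0).
Local Notation J := (bc_underlying e x0).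
Local Notation perfect_matching M := (perfect_matching_on e setT M).

Let mc : matching_covered e. Proof. by case: ce. Qed.
Let x0b : e x0 b. Proof. by rewrite nbr_x0 eqxx. Qed.
Let x0c : e x0 c. Proof. by rewrite nbr_x0 eqxx orbT. Qed.

Lemma partner_x0 M : perfect_matching M -> partner M x0 = b \/ partner M x0 = c.
Proof.
by move=> pmM; have := partner_adj sym_e pmM x0; rewrite nbr_x0 => /orP [] /eqP; tauto.
Qed.

Lemma nbrs_x0_nonadj : ~~ e b c.
Proof.
apply/negP => /(matching_covered_partner mc) [M pmM Mb].
have MK := partnerK pmM; have Mc : partner M c = b by rewrite -Mb MK.
case: (partner_x0 pmM) => Mx0.
  by move: (adj_neq irr_e x0c); rewrite -Mb -Mx0 MK eqxx.
by move: (adj_neq irr_e x0b); rewrite -Mc -Mx0 MK eqxx.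
Qed.

Lemma nbrs_x0_stable u v : e x0 u -> e x0 v -> ~~ e u v.
Proof.
rewrite !nbr_x0 => /orP [] /eqP -> /orP [] /eqP ->; rewrite ?irr_e ?nbrs_x0_nonadj //.
by rewrite sym_e nbrs_x0_nonadj.
Qed.

Lemma common_nbr_uniq q1 q2 : q1 != x0 -> q2 != x0 ->
  e b q1 -> e c q1 -> e b q2 -> e c q2 -> q1 = q2.
Proof.
move=> q1x q2x bq1 cq1 bq2 cq2; apply/eqP/contraT => q12.
have [||v] :=
  cycle_extendable_nbr_off_cycle sym_e (s := [:: b; q1; c; q2]) (x := x0) ce.
- split => //=; last by rewrite bq1 (sym_e q1) cq1 cq2 (sym_e q2) bq2.
  rewrite !inE !negb_or bc q12 (eq_sym q1).
  by rewrite !(adj_neq irr_e bq1, adj_neq irr_e bq2, adj_neq irr_e cq1)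
             ?(adj_neq irr_e cq2).
- by rewrite !inE !negb_or (adj_neq irr_e x0b) (adj_neq irr_e x0c) !(eq_sym x0) q1x q2x.
- by rewrite nbr_x0 !inE => /orP [] ->; rewrite ?orbT.
Qed.

Lemma card_common_nbrs q : #|[set u | e x0 u & e u q]| = e b q + e c q.
Proof.
rewrite (cardsD1 b) (cardsD1 c) !inE x0b x0c (eq_sym c) (negbTE bc) /=.
suff -> : [set u | e x0 u & e u q] :\ b :\ c = set0 by rewrite cards0 addn0.
by apply/setP => u; rewrite !inE nbr_x0; case: eqP; case: eqP; rewrite ?andbF.
Qed.

Lemma bc_mult_loop p : p \in V -> bc_mult e x0 p p = 0.
Proof.
case: (eqVneq p x0) => [-> _|px pV]; first exact: bc_mult_x0x0 nbrs_x0_stable.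
by rewrite (bc_mult_off sym_e) ?irr_e.
Qed.

Lemma bc_mult_le1 p q : p \in V -> q \in V -> p != q ->
  (forall r, r != x0 -> e b r -> e c r -> [set p; q] != [set x0; r]) ->
  bc_mult e x0 p q <= 1.
Proof.
move=> pV qV pq not_double.
have x0_le1 r : r \in V -> r != x0 -> [set p; q] = [set x0; r] ->
    bc_mult e x0 x0 r <= 1.
  move=> rV rx; rewrite (bc_mult_x0 sym_e irr_e) // card_common_nbrs.
  by move: (not_double r rx); case: (e b r); case: (e c r) => // /(_ isT isT)/eqP.
case: (eqVneq p x0) => [px|px]; first by rewrite px x0_le1 // -px // eq_sym.
case: (eqVneq q x0) => [qx|qx]; last by rewrite (bc_mult_off sym_e) ?leq_b1.
by rewrite qx bc_mult_sym x0_le1 // setUC qx.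
Qed.

Lemma bc_simple_or_two_multiple_edges :
  bc_simple e x0 \/ bc_exactly_two_multiple_edges e x0.
Proof.
case: (pickP [pred q | [&& q != x0, e b q & e c q]]) => [q /and3P [qx bq cq]|none].
  right; exists x0, q.
  have qV : q \in V.
    rewrite mem_bc_vertices nbr_x0 negb_or !(eq_sym q).
    by rewrite (adj_neq irr_e bq) (adj_neq irr_e cq).
  split; rewrite ?(bc_vertices_x0 _ irr_e) 1?eq_sym //.
    by rewrite (bc_mult_x0 sym_e irr_e) // card_common_nbrs bq cq.
  move=> p' q' p'V q'V pq' ne; apply: bc_mult_le1 => // r rx br cr.
  by rewrite (common_nbr_uniq rx qx br cr bq cq).
left; split; first exact: bc_mult_loop.
move=> p q pV qV pq; apply: bc_mult_le1 => // r rx br cr.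
by have := none r; rewrite /= rx br cr.
Qed.

Lemma deg_x0 : deg e x0 = 2.
Proof.
rewrite deg_card (_ : [set y | e x0 y] = [set b; c]) ?cards2 ?bc //.
by apply/setP => y; rewrite !inE nbr_x0.
Qed.

Lemma nbr_x0_deg_gt2 u : irreducible e -> e x0 u -> 2 < deg e u.
Proof.
move=> [_ [_ stable2]] x0u.
have [u' x0u' u'u] : exists2 u', e x0 u' & u' != u.
  move: x0u; rewrite nbr_x0 => /orP [] /eqP ->; [exists c | exists b] => //.
  by rewrite eq_sym.
have [M pmM Mx0] := matching_covered_partner mc x0u'.
have Mu : partner M u != x0.
  by apply: contra u'u => /eqP Mu; rewrite -Mx0 -Mu (partnerK pmM).
have ge2 : 1 < deg e u.
  rewrite deg_card; apply/card_gt1P; exists x0, (partner M u).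
  by rewrite !inE sym_e x0u (partner_adj sym_e pmM) eq_sym Mu.
have ne2 : deg e u != 2.
  apply/eqP => d2.
  by move: (stable2 x0 u (in_setT x0) (in_setT u) deg_x0 d2); rewrite x0u.
by rewrite ltn_neqAle eq_sym ne2 ge2.
Qed.

Lemma bc_underlying_deg_x0_neq2 : irreducible e -> deg_on V J x0 != 2.
Proof.
move=> irr; apply/eqP => d2.
have nbhd_sub u : e x0 u -> [set y | e u y] :\ x0 \subset [set y in V | J x0 y].
  move=> x0u; apply/subsetP => y; rewrite !inE => /andP [yx uy].
  have x0y : ~~ e x0 y := contraTN (nbrs_x0_stable x0u) uy.
  rewrite x0y (bc_underlying_x0 sym_e irr_e) ?mem_bc_vertices //.
  by apply/card_gt0P; exists u; rewrite inE x0u.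
have nbhd_eq u : e x0 u -> [set y | e u y] :\ x0 = [set y in V | J x0 y].
  move=> x0u; apply/eqP; rewrite eqEcard nbhd_sub //= -[#|_|]/(deg_on V J x0) d2.
  by have := nbr_x0_deg_gt2 irr x0u; rewrite deg_card (cardsD1 x0) inE sym_e x0u.
have /card_gt1P [q1 [q2 [q1N q2N q12]]] : 1 < #|[set y in V | J x0 y]|.
  by rewrite -[#|_|]/(deg_on V J x0) d2.
move: (q1N) (q2N); rewrite -(nbhd_eq b x0b) !inE => /andP [q1x bq1] /andP [q2x bq2].
move: q1N q2N; rewrite -(nbhd_eq c x0c) !inE => /andP [_ cq1] /andP [_ cq2].
by move: q12; rewrite (common_nbr_uniq q1x q2x bq1 cq1 bq2 cq2) eqxx.
Qed.

Lemma common_nbr_partners_differ M0 M1 d :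
  perfect_matching M0 -> perfect_matching M1 ->
  partner M0 x0 = b -> partner M1 x0 = c -> e d b -> e d c ->
  partner M0 d != partner M1 d.
Proof.
move=> pm0 pm1 M0x0 M1x0 db dc; case: (eqVneq d x0) => [->|dx0].
  by rewrite M0x0 M1x0.
apply/eqP => agree; set f := partner M1; set g := partner M0.
have fK : involutive f := partnerK pm1; have gK : involutive g := partnerK pm0.
have fc : f c = x0 by rewrite -M1x0 fK.
have hc : (g \o f) c = b by rewrite /= fc.
have [k [Wk uniqW]] := alt_walk_reaches fK gK (partner_neq sym_e irr_e pm1)
  (partner_neq sym_e irr_e pm0) hc.
set W := alt_walk f g b in Wk uniqW *; set L := mkseq W k.*2.+1.
have Wx0 : W k.*2.+1 = x0.
  by rewrite -[W _]/(alt_step f g k.*2 (W k.*2)) Wk /alt_step odd_double.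
move: uniqW; rewrite mkseqS rcons_uniq -/L Wx0 => /andP [x0L uniqL].
have k_gt0 : 0 < k by rewrite lt0n; apply: contra_neq bc => k0; rewrite -Wk k0.
have dL : d \notin L.
  apply/negP => /(mem_alt_walk_agree fK gK (esym agree) uniqL) [] dW.
    by move: db; rewrite dW /= irr_e.
  by move: dc; rewrite dW -/W Wk irr_e.
have W_adj i : e (W i) (W i.+1).
  by rewrite /= /alt_step; case: odd; apply: (partner_adj sym_e).
have inL i : i <= k.*2 -> W i \in L.
  by move=> ik; apply: map_f; rewrite mem_iota.
have [||v] := cycle_extendable_nbr_off_cycle sym_e (s := d :: L) (x := x0) ce.
- have sizeL : size (d :: L) = k.*2.+2 by rewrite /= size_map size_iota.
  split; rewrite ?sizeL ?cons_uniq ?dL //=; first by lia.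
    by rewrite odd_double.
  by apply: cycle_mkseq; rewrite // Wk sym_e.
- by rewrite in_cons negb_or eq_sym dx0.
rewrite nbr_x0 in_cons negb_or => /orP [] /eqP -> /andP [_].
  by rewrite (inL 0).
by rewrite -Wk inL.
Qed.

Lemma partner_in_bc_nbhd M x : perfect_matching M -> x \in V -> x != x0 ->
  partner M b != x -> partner M c != x -> partner M x \in [set y in V | J x y] :\ x0.
Proof.
move=> pmM xV xx bx cx; set y := partner M x.
have xy : e x y := partner_adj sym_e pmM x.
have yx0 : y != x0 := bc_vertices_nbr_neq sym_e xV xy.
have notK v : partner M v != x -> y != v.
  by move=> vx; apply: contraNneq vx => <-; rewrite /y (partnerK pmM).
have yV : y \in V by rewrite mem_bc_vertices nbr_x0 negb_or !notK.
by rewrite in_setD1 inE yx0 yV (bc_underlying_off sym_e irr_e) ?yV.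
Qed.

Lemma bc_underlying_deg_common_neq2 x : irreducible e -> x \in V -> x != x0 ->
  e b x -> e c x -> deg_on V J x != 2.
Proof.
move=> irr xV xx bx cx; apply/eqP => d2.
have other_nbr u : e x0 u -> exists s, [&& e u s, s != x0 & s != x].
  move=> x0u; have : 0 < #|[set y | e u y] :\ x0 :\ x|.
    by have := nbr_x0_deg_gt2 irr x0u; rewrite deg_card (cardsD1 x0) (cardsD1 x); lia.
  case/card_gt0P => s; rewrite !inE => /and3P [sx sx0 us].
  by exists s; rewrite us sx0 sx.
have [s /and3P [bs sx0 sx]] := other_nbr b x0b.
have [s' /and3P [cs s'x0 s'x]] := other_nbr c x0c.
have [M1 pm1 M1b] := matching_covered_partner mc bs.
have [M0 pm0 M0c] := matching_covered_partner mc cs.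
have M1x0 : partner M1 x0 = c.
  case: (partner_x0 pm1) => // M1x0.
  by move: sx0; rewrite -M1b -M1x0 (partnerK pm1) eqxx.
have M0x0 : partner M0 x0 = b.
  case: (partner_x0 pm0) => // M0x0.
  by move: s'x0; rewrite -M0c -M0x0 (partnerK pm0) eqxx.
have /cards1P [v Ev] : #|[set y in V | J x y] :\ x0| == 1.
  move: d2; rewrite /deg_on (cardsD1 x0) inE (bc_vertices_x0 _ irr_e) bc_underlying_sym.
  by rewrite (bc_underlying_x0 sym_e irr_e) // card_common_nbrs bx cx add1n => -[->].
have partner_x M : perfect_matching M -> partner M b != x -> partner M c != x ->
    partner M x = v.
  by move=> pmM Mb Mc; apply/set1P; rewrite -Ev partner_in_bc_nbhd.
have M0b : partner M0 b = x0 by rewrite -M0x0 (partnerK pm0).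
have M1c : partner M1 c = x0 by rewrite -M1x0 (partnerK pm1).
have : partner M0 x != partner M1 x.
  by apply: common_nbr_partners_differ; rewrite // sym_e.
by rewrite !partner_x ?eqxx ?M0b ?M0c ?M1b ?M1c // eq_sym.
Qed.

Lemma bc_underlying_deg_eq2 z : irreducible e -> z \in V -> deg_on V J z = 2 ->
  z != x0 /\ deg e z = 2.
Proof.
move=> irr zV dz.
have zx : z != x0.
  by apply: contra_eqN dz => /eqP ->; exact: bc_underlying_deg_x0_neq2.
split => //; rewrite -(bc_underlying_deg (x0 := x0) sym_e irr_e) // card_common_nbrs.
case: (boolP (e b z)) => bz; case: (boolP (e c z)) => cz //.
by move: (bc_underlying_deg_common_neq2 irr zV zx bz cz); rewrite dz.
Qed.

Lemma bc_underlying_irreducible : irreducible e -> irreducible_on V J.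
Proof.
move=> irr; split; first by move=> p q _ _; exact: bc_underlying_sym.
split; first by move=> p _; rewrite /bc_underlying eqxx !andbF.
move=> x y xV yV /(bc_underlying_deg_eq2 irr xV) [xx dx].
move=> /(bc_underlying_deg_eq2 irr yV) [yx dy].
rewrite (bc_underlying_off sym_e irr_e) // negb_and; apply/orP; right.
by case: irr => _ [_ stable2]; apply: stable2.
Qed.

End DegreeTwoVertex.

Theorem corollary5p2 (T : finType) (e : rel T) (x0 : T) :
  simple_graph e -> cycle_extendable e -> deg e x0 = 2 ->
  (bc_simple e x0 \/ bc_exactly_two_multiple_edges e x0) /\
  (irreducible e -> irreducible_on (bc_vertices e x0) (bc_underlying e x0)).
Proof.
move=> [sym_e irr_e] ce.
rewrite deg_card => /eqP/cards2P [b [c [bc nbrs]]].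
have nbr_x0 v : e x0 v = (v == b) || (v == c).
  by rewrite -in_set2 -nbrs inE.
split; first exact: bc_simple_or_two_multiple_edges nbr_x0 bc.
exact: bc_underlying_irreducible nbr_x0 bc.
Qed.
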